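(* Consider the discrete-time linear controller $x(t+1)=Fx(t)+Gy(t)$, $u(t)=Hx(t)$, $x(0)=x^{\mathrm{ini}}$, with $F\in\mathbb{Z}^{n\times n}$, $G\in\mathbb{Q}^{n\times p}$, $H\in\mathbb{Q}^{m\times n}$, $x^{\mathrm{ini}}\in\mathbb{Q}^n$ and inputs $y(t)\in\mathbb{Q}^p$ for all $t\ge 0$. Let $\bar F=TFT^{-1}=\mathrm{diag}(C_0,\dots,C_{\kappa-1})$ be the rational canonical form of $F$ with $T\in\mathbb{Q}^{n\times n}$ nonsingular, and let $L,s_1,s_2$ be scale factors with $1/L,1/s_1,1/s_2\in\mathbb{N}$ such that $\bar G:=TG/s_1\in\mathbb{Z}^{n\times p}$, $\bar H:=HT^{-1}/s_2\in\mathbb{Z}^{m\times n}$, $z^{\mathrm{ini}}:=Tx^{\mathrm{ini}}/(Ls_1)\in\mathbb{Z}^n$ and $\bar y(t):=y(t)/L\in\mathbb{Z}^p$ for all $t\ge0$. Let $q$ be a prime, $N$ a power of two, $n$ a power of two with $N/n\in\mathbb{N}$, assume $np\le N$, and let $\tau=2^{\lceil\log_2 m\rceil}$ with $\tau\le N/n$. Define the reformulated controller over $R_q$: $$\tilde z(t+1)=\sum_{i=0}^{\kappa-1}\tilde F_i\cdot\tilde z_{r_i}(t)+X^{-N/n}\cdot\tilde z(t)+\tilde G\cdot\tilde y(t),\qquad \tilde u(t)=\tilde H\cdot \mathrm{Slot}_n(\tilde z(t)),\qquad \tilde z(0)=\mathrm{Pack}(z^{\mathrm{ini}}),$$ where $\tilde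 z_{r_i}(t):=\mathrm{Slot}_1(X^{-r_iN/n}\cdot\tilde z(t))\in\mathbb{Z}_q$, and its output $u'(t):=(Ls_1s_2)\cdot\mathrm{Unpack}(\tilde u(t))$. If $$\sup_{t\ge0}\max\left\{\left\|\frac{Tx(t)}{Ls_1}\right\|,\ \left\|\frac{u(t)}{Ls_1s_2}\right\|\right\}<\frac q2,$$ then $u'(t)=u(t)$ for all $t\ge0$.
   Context: Companion matrix: a $d\times d$ matrix with arbitrary first column, entries $1$ at positions $(i,i+1)$, $i=1,\dots,d-1$, and zeros elsewhere. The rational canonical form of $F$ is the unique matrix $\mathrm{diag}(C_0,\dots,C_{\kappa-1})$ similar to $F$ over $\mathbb{Q}$ with each $C_i$ a companion matrix and $\det(sI-C_i)\mid\det(sI-C_{i+1})$; for integer $F$ it is an integer matrix. $\|\cdot\|$ is the infinity norm (for polynomials, the maximum absolute coefficient). $\mathbb{Z}_q:=\mathbb{Z}\cap[-q/2,q/2)$ and $a \bmod q:=a-\lfloor (a+q/2)/q\rfloor q$ (applied entrywise/coefficientwise). $R_q:=\mathbb{Z}_q[X]/\langle X^N+1\rangle$: polynomials of degree $<N$ with coefficients in $\mathbb{Z}_q$, with addition and multiplication being usual polynomial operations followed by reduction using $X^N=-1$ and coefficientwise $\bmod\ q$; $X^{-k}$ denotes the inverse of $X^k$ in $R_q$ (namely $-X^{N-k}$ for $0<k\le N$). For $a\in\mathbb{Z}^n$, $\mathrm{Pack}(a):=\sum_{i=0}^{n-1}(a_i\bmod q)X^{iN/n}$. For a power of two $\alpha$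 and $\mathrm{a}=\sum_{i=0}^{N-1}\mathrm{a}_iX^i$, $\mathrm{Slot}_\alpha(\mathrm{a}):=\sum_{i=0}^{\alpha-1}\mathrm{a}_{iN/\alpha}X^{iN/\alpha}$ (so $\mathrm{Slot}_1$ gives the constant term). $\mathrm{Unpack}(\mathrm{a}):=[\mathrm{a}_0,\mathrm{a}_{N/(n\tau)},\dots,\mathrm{a}_{(m-1)N/(n\tau)}]^\top\in\mathbb{Z}_q^m$. Let $S\in\mathbb{Z}^{n\times n}$ have entries $S_{i,i+1}=1$ for $i=1,\dots,n-1$, $S_{n,1}=-1$, and zeros elsewhere. Let $r_0=0$ and $r_i$ be the sum of the sizes of $C_0,\dots,C_{i-1}$ (the 0-based column index where block $C_i$ starts), and let $\bar F'_i\in\mathbb{Z}^n$ be the $(r_i+1)$-th column of $\bar F-S$; $\tilde F_i:=\mathrm{Pack}(\bar F'_i)$. With $\bar G=(\bar G_{i,j})$: $\tilde G_i:=\sum_{j=0}^{p-1}\bar G_{i,j}X^{-j}\bmod q$ and $\tilde G:=\sum_{i=0}^{n-1}\tilde G_i\cdot X^{iN/n}$. With $\bar y(t)=[\bar y_0(t),\dots,\bar y_{p-1}(t)]^\top$: $\tilde y(t):=\sum_{j=0}^{p-1}\bar y_j(t)X^j\bmod q$. With $\bar H=(\bar H_{i,j})$: $\tilde H_i:=\sum_{j=0}^{n-1}\bar H_{i,j}X^{-jN/n}\bmod q$ and $\tilde H:=\sum_{i=0}^{m-1}\tilde H_i\cdot X^{iN/(n\tau)}$. Matrix/row/column indices of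 $\bar G,\bar H$ are 0-based. *)

From HB Require Import structures.
From mathcomp Require Import all_boot all_order all_algebra.
Set Implicit Arguments. Unset Strict Implicit. Unset Printing Implicit Defensive.
Import Order.TTheory GRing.Theory Num.Theory.
Local Open Scope ring_scope.

Definition companion (d : nat) (a : nat -> int) : 'M[int]_d :=
  \matrix_(i < d, j < d)
    if (j : nat) == 0%N then a (i : nat) else if (j : nat) == i.+1 then 1 else 0.

(* r_k : 0-based starting index of block k, given block sizes ds *)
Definition bstart (ds : seq nat) (k : nat) : nat := sumn (take k ds).

Definition blk (ds : seq nat) (i : nat) : nat :=
  count (fun k => bstart ds k.+1 <= i)%N (iota 0 (size ds)).

(* entry (i,j) (0-based) of diag(C_0, ..., C_{kappa-1}), C_k = companion (nth 0 ds k) (c k) *)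
Definition Fbar_entry (ds : seq nat) (c : nat -> nat -> int) (i j : nat) : int :=
  let k := blk ds i in
  if blk ds j == k then
    let a := (i - bstart ds k)%N in
    let b := (j - bstart ds k)%N in
    if b == 0%N then c k a else if b == a.+1 then 1 else 0
  else 0.

Definition Fbar_mx (n : nat) (ds : seq nat) (c : nat -> nat -> int) : 'M[int]_n :=
  \matrix_(i < n, j < n) Fbar_entry ds c i j.

(* "diag(C_0..C_{kappa-1}) with C_k companion, sizes ds, first columns c k,
   det(sI - C_k) | det(sI - C_{k+1})", i.e. it is in rational canonical form *)
Definition rcf_data (n : nat) (ds : seq nat) (c : nat -> nat -> int) : Prop :=
  all (fun d => 0 < d)%N ds /\ sumn ds = n /\
  forall k, (k.+1 < size ds)%N ->
    char_poly (map_mx intr (companion (nth 0%N ds k) (c k)) : 'M[rat]_(nth 0%N ds k))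
    %| char_poly (map_mx intr (companion (nth 0%N ds k.+1) (c k.+1))
                  : 'M[rat]_(nth 0%N ds k.+1)).

(* S : S_{i,i+1} = 1, S_{n,1} = -1 (1-based); here 0-based entries *)
Definition S_entry (n i j : nat) : int :=
  if j == i.+1 then 1 else if (i == n.-1) && (j == 0%N) then -1 else 0.

Fixpoint xtraj (n p : nat) (F : 'M[rat]_n) (G : 'M[rat]_(n, p))
  (xini : 'cV[rat]_n) (y : nat -> 'cV[rat]_p) (t : nat) : 'cV[rat]_n :=
  match t with
  | 0 => xini
  | t'.+1 => F *m xtraj F G xini y t' + G *m y t'
  end.

Definition vnorm (k : nat) (v : 'cV[rat]_k) : rat := \big[Num.max/0]_(i < k) `|v i 0|.

(* a mod q := a - floor((a + q/2)/q) q  ( = a - floor((2a+q)/(2q)) q ) *)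
Definition modq (q : nat) (a : int) : int :=
  a - ((2 * a + q%:Z) %/ (2 * q%:Z))%Z * q%:Z.

(* reduction using X^N = -1 : coefficient i *)
Definition nred (N : nat) (a : {poly int}) (i : nat) : int :=
  \sum_(k < size a | (k %% N)%N == i) (-1) ^+ (k %/ N)%N * a`_k.

(* canonical representative in R_q of an integer polynomial *)
Definition rq (N q : nat) (a : {poly int}) : {poly int} :=
  \poly_(i < N) modq q (nred N a i).

(* X^{-k} in R_q  (X^{2N} = 1) *)
Definition Xneg (N q k : nat) : {poly int} := rq N q 'X^(2 * N - k %% (2 * N)).

Definition Pack (N q n : nat) (a : 'cV[int]_n) : {poly int} :=
  \sum_(i < n) (modq q (a i 0))%:P * 'X^(i * (N %/ n)).

Definition Slot (N alpha : nat) (a : {poly int}) : {poly int} :=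
  \sum_(i < alpha) (a`_(i * (N %/ alpha)))%:P * 'X^(i * (N %/ alpha)).

Definition Unpack (N n tau m : nat) (a : {poly int}) : 'cV[int]_m :=
  \col_(i < m) a`_(i * (N %/ (n * tau))).

Definition Ftil (N q n : nat) (ds : seq nat) (c : nat -> nat -> int) (k : nat) : {poly int} :=
  Pack N q (\col_(i < n) (Fbar_entry ds c i (bstart ds k) - S_entry n i (bstart ds k))).

Definition Gtil (N q n p : nat) (Gbar : 'M[int]_(n, p)) : {poly int} :=
  rq N q (\sum_(i < n)
            rq N q (\sum_(j < p) (Gbar i j)%:P * Xneg N q j) * 'X^(i * (N %/ n))).

Definition Htil (N q n m tau : nat) (Hbar : 'M[int]_(m, n)) : {poly int} :=
  rq N q (\sum_(i < m)
            rq N q (\sum_(j < n) (Hbar i j)%:P * Xneg N q (j * (N %/ n)))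
              * 'X^(i * (N %/ (n * tau)))).

Definition ytil (N q p : nat) (ybar : 'cV[int]_p) : {poly int} :=
  rq N q (\sum_(j < p) (ybar j 0)%:P * 'X^j).

Fixpoint ztraj (N q n p : nat) (ds : seq nat) (c : nat -> nat -> int)
  (Gbar : 'M[int]_(n, p)) (zini : 'cV[int]_n) (ybar : nat -> 'cV[int]_p)
  (t : nat) : {poly int} :=
  match t with
  | 0 => Pack N q zini
  | t'.+1 =>
      let z := ztraj N q ds c Gbar zini ybar t' in
      rq N q (\sum_(k < size ds)
                 Ftil N q n ds c k * Slot N 1 (rq N q (Xneg N q (bstart ds k * (N %/ n)) * z))
              + Xneg N q (N %/ n) * z
              + Gtil N q Gbar * ytil N q (ybar t'))
  end.

Definition util (N q n p m tau : nat) (ds : seq nat) (c : nat -> nat -> int)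
  (Gbar : 'M[int]_(n, p)) (Hbar : 'M[int]_(m, n)) (zini : 'cV[int]_n)
  (ybar : nat -> 'cV[int]_p) (t : nat) : {poly int} :=
  rq N q (Htil N q tau Hbar * Slot N n (ztraj N q ds c Gbar zini ybar t)).

Definition tau_of (m : nat) : nat := 2 ^ up_log 2 m.

From HB Require Import structures.
From mathcomp Require Import all_boot all_order all_algebra.
From mathcomp Require Import zify ring lra.
Set Implicit Arguments. Unset Strict Implicit. Unset Printing Implicit Defensive.
Import Order.TTheory GRing.Theory Num.Theory.
Local Open Scope ring_scope.

(* In the coordinates z = T x / (L s1) the controller is the integer recursion
   z(t+1) = Fbar z(t) + Gbar ybar(t), and u = (L s1 s2) Hbar z.  The packed
   state z~(t) stores z_i(t) mod q in the coefficient of X^(i N/n) of an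
   element of Z_q[X]/(X^N + 1); the other coefficients carry garbage that is
   never read.  Reading a coefficient of the image of an integer polynomial in
   F_q[X]/(X^N + 1) is a linear functional for which multiplication by X^s
   moves coefficient k to k + s, with a sign change whenever N is crossed.
   With it, multiplication by X^(-N/n) realises the negacyclic shift S, the
   terms F~_i Slot_1(X^(-r_i N/n) z~) realise the columns of Fbar - S, which
   vanish outside the block starts r_i, and G~ y~ and H~ Slot_n(z~) realise
   the matrix-vector products in the slots.  Hence the read-out coefficients
   of u~(t) are congruent to Hbar z(t) modulo q, and since both lie in
   [-q/2, q/2) they are equal. *)

Lemma sum_if_eq (R : pzSemiRingType) (I : finType) (F : I -> R) (k : I) :
  \sum_(i : I) F i * (if i == k then 1 else 0) = F k.
Proof.
rewrite (bigD1 k) //= eqxx mulr1 big1 ?addr0 // => i /negbTE ->.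
by rewrite mulr0.
Qed.

Section BlockStarts.
Local Open Scope nat_scope.
Variable ds : seq nat.

Lemma bstart_mono : {homo bstart ds : k l / k <= l}.
Proof.
rewrite /bstart; elim: ds => [|d ds' IH] [|k] [|l] //= hkl.
by rewrite leq_add2l IH.
Qed.

Lemma bstartS k : k < size ds -> bstart ds k.+1 = bstart ds k + nth 0 ds k.
Proof.
rewrite /bstart; elim: ds k => [|d ds' IH] [|k] //= hk.
- by rewrite take0 addn0.
- by rewrite IH // addnA.
Qed.

Lemma blk_unique i k : k < size ds ->
  bstart ds k <= i < bstart ds k.+1 -> blk ds i = k.
Proof.
move=> hk /andP[h1 h2]; rewrite /blk.
have -> : size ds = k + (size ds - k) by rewrite subnKC // ltnW.
rewrite iotaD count_cat add0n.
rewrite (@eq_in_count _ _ predT); last first.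
  move=> l; rewrite mem_iota add0n => /andP[_ hl].
  by apply: leq_trans h1; apply: bstart_mono.
rewrite count_predT size_iota (@eq_in_count _ _ pred0) ?count_pred0 ?addn0 //.
move=> l; rewrite mem_iota => /andP[hl _] /=.
by apply/negbTE; rewrite -ltnNge; apply: leq_trans h2 _; apply: bstart_mono.
Qed.

Lemma blk_spec i : i < sumn ds ->
  blk ds i < size ds /\ bstart ds (blk ds i) <= i < bstart ds (blk ds i).+1.
Proof.
move=> hi.
have [k hk hki] : exists2 k, k < size ds & bstart ds k <= i < bstart ds k.+1.
  rewrite /bstart; elim: ds i hi => [|d ds' IH] i //= hi.
  have [hid|hdi] := ltnP i d; first by exists 0; rewrite //= take0 addn0.
  have [k hk hki] := IH (i - d) ltac:(lia).
  by exists k.+1 => //=; lia.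
by rewrite (blk_unique hk hki).
Qed.

Hypothesis ds_pos : all (fun d => 0 < d) ds.

Lemma bstart_lt k l : k < l -> l <= size ds -> bstart ds k < bstart ds l.
Proof.
move=> hkl hl; have hk : k < size ds := leq_trans hkl hl.
apply: (@leq_trans (bstart ds k.+1)); last exact: bstart_mono.
by rewrite bstartS // -addn1 leq_add2l; apply: (all_nthP 0 ds_pos).
Qed.

Lemma bstart_lt_sumn k : k < size ds -> bstart ds k < sumn ds.
Proof. by move=> hk; have := bstart_lt hk (leqnn _); rewrite /bstart take_size. Qed.

Lemma bstart_inj k l : k < size ds -> l < size ds -> bstart ds k = bstart ds l -> k = l.
Proof.
move=> hk hl e; case: (ltngtP k l) => // hkl.
- by have := bstart_lt hkl (ltnW hl); rewrite e ltnn.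
- by have := bstart_lt hkl (ltnW hk); rewrite e ltnn.
Qed.

End BlockStarts.

Lemma Fbar_entry_off_starts (n : nat) (ds : seq nat) (c : nat -> nat -> int) (i j : nat) :
  sumn ds = n -> (i < n)%N -> (j < n)%N ->
  (forall l, (l < size ds)%N -> j != bstart ds l) ->
  Fbar_entry ds c i j = S_entry n i j.
Proof.
move=> sum_ds hi hj off.
have [hbj /andP[hbj1 hbj2]] := blk_spec (ds := ds) (i := j) ltac:(lia).
have [_ /andP[hbi1 hbi2]] := blk_spec (ds := ds) (i := i) ltac:(lia).
have hjgt : (bstart ds (blk ds j) < j)%N by rewrite ltn_neqAle eq_sym off.
have -> : S_entry n i j = if j == i.+1 then 1 else 0.
  rewrite /S_entry; case: eqP => // _.
  by rewrite (_ : (j == 0)%N = false) ?andbF //; apply/negbTE; lia.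
rewrite /Fbar_entry; case: eqP => [e|ne].
  rewrite -e (_ : (j - bstart ds (blk ds j) == 0)%N = false); last by apply/negbTE; lia.
  congr (if _ then _ else _); apply/eqP/eqP; move: hbi1 hjgt; rewrite -e; lia.
case: eqP => // hji; exfalso; apply: ne; apply/esym.
by apply: blk_unique => //; apply/andP; split; lia.
Qed.

Section EntrySums.
Variable R : pzRingType.
Implicit Types g : nat -> R.

Lemma sum_S_entry (n k : nat) g : (k < n)%N ->
  \sum_(j < n) (S_entry n k j)%:~R * g j = if (k.+1 < n)%N then g k.+1 else - g 0%N.
Proof.
move=> hk; rewrite /S_entry; case: ltnP => hkn.
  rewrite (bigD1 (Ordinal hkn)) //= eqxx mul1r big1 ?addr0 // => j /negbTE hj.
  by rewrite [_ == _]hj (_ : (k == n.-1) = false) ?mul0r //; apply/negbTE; lia.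
have n_gt0 : (0 < n)%N by lia.
rewrite (bigD1 (Ordinal n_gt0)) //=.
rewrite (_ : (k == n.-1) = true) /=; last by apply/eqP; lia.
rewrite mulN1r big1 ?addr0 // => j hj.
have j_gt0 : (0 < j)%N by rewrite lt0n; apply: contraNneq hj => e; apply/eqP/val_inj.
have j_ne : ((j : nat) == k.+1) = false by apply/negbTE; have := ltn_ord j; lia.
by rewrite j_ne (negbTE (lt0n_neq0 j_gt0)) mul0r.
Qed.

Lemma sum_Fbar_entry (n k : nat) (ds : seq nat) (c : nat -> nat -> int) g :
  all (fun d => 0 < d)%N ds -> sumn ds = n -> (k < n)%N ->
  \sum_(l < size ds)
      (Fbar_entry ds c k (bstart ds l) - S_entry n k (bstart ds l))%:~R * g (bstart ds l)
    + \sum_(j < n) (S_entry n k j)%:~R * g j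
  = \sum_(j < n) (Fbar_entry ds c k j)%:~R * g j.
Proof.
move=> ds_pos sum_ds hk.
pose f j := (Fbar_entry ds c k j - S_entry n k j)%:~R * g j.
have start_lt (l : 'I_(size ds)) : (bstart ds l < n)%N.
  by rewrite -sum_ds bstart_lt_sumn.
have -> : \sum_(l < size ds) f (bstart ds l) = \sum_(j < n) f j.
  have delta (l : 'I_(size ds)) :
      f (bstart ds l) = \sum_(j < n) f j * (if j == Ordinal (start_lt l) then 1 else 0).
    by rewrite sum_if_eq.
  rewrite (eq_bigr _ (fun l _ => delta l)) exchange_big /=; apply: eq_bigr => j _.
  case: (pickP (fun l : 'I_(size ds) => j == Ordinal (start_lt l))) => [l0 hl0 | none].
    rewrite (bigD1 l0) //= hl0 mulr1 big1 ?addr0 // => l hl.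
    case: eqP => [/(congr1 val) /= e|]; last by rewrite mulr0.
    case/eqP: hl; apply/val_inj/(bstart_inj ds_pos (ltn_ord _) (ltn_ord _)).
    by rewrite -e; move/eqP: hl0 => /(congr1 val).
  rewrite big1 => [|l _]; last by rewrite none mulr0.
  rewrite /f (@Fbar_entry_off_starts n) ?subrr ?mul0r // => l hl.
  by have := none (Ordinal hl); apply: contraFneq => e; apply/eqP/val_inj.
rewrite -big_split /=; apply: eq_bigr => j _.
by rewrite /f intrB mulrBl subrK.
Qed.

End EntrySums.

Fixpoint zbar_traj (n p : nat) (Fb : 'M[int]_n) (Gb : 'M[int]_(n, p))
  (z0 : 'cV[int]_n) (yb : nat -> 'cV[int]_p) (t : nat) : 'cV[int]_n :=
  if t is t'.+1 then Fb *m zbar_traj Fb Gb z0 yb t' + Gb *m yb t' else z0.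

Lemma ltn_mul_add (n D a b : nat) : (a < n)%N -> (b < D)%N -> (a * D + b < n * D)%N.
Proof.
move=> ha hb; have : (a.+1 * D <= n * D)%N by rewrite leq_mul2r ha orbT.
by rewrite mulSn; lia.
Qed.

Lemma eqn_mul_add (D a b c d : nat) : (b < D)%N -> (d < D)%N ->
  (a * D + b == c * D + d)%N = (a == c) && (b == d).
Proof.
move=> hb hd; have D_gt0 : (0 < D)%N by lia.
apply/eqP/andP => [e|[/eqP-> /eqP->]] //.
have e1 := congr1 (divn^~ D) e; have e2 := congr1 (modn^~ D) e.
rewrite /= !divnMDl // !divn_small // !addn0 in e1.
rewrite /= !modnMDl !modn_small // in e2.
by rewrite e1 e2.
Qed.

Lemma Slot1E (N : nat) (a : {poly int}) : Slot N 1 a = (a`_0)%:P.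
Proof. by rewrite /Slot big_ord1 mul0n expr0 mulr1. Qed.

Lemma intr_modq (q : nat) (a : int) : prime q -> ((modq q a)%:~R : 'F_q) = a%:~R.
Proof.
move=> q_prime; rewrite /modq intrB intrM.
by rewrite -[(q%:Z)%:~R]pmulrn (pchar_Fp_0 q_prime) mulr0 subr0.
Qed.

Lemma modq_window (q : nat) (a : int) : (0 < q)%N -> - (q%:Z) <= 2 * modq q a < q%:Z.
Proof.
move=> q_gt0; rewrite /modq.
have hd : 2 * q%:Z != 0 by lia.
have hd' : 0 < 2 * q%:Z by lia.
have := divz_eq (2 * a + q%:Z) (2 * q%:Z).
have := modz_ge0 (2 * a + q%:Z) hd; have := ltz_pmod (2 * a + q%:Z) hd'.
set x := ((2 * a + q%:Z) %/ (2 * q%:Z))%Z; set r := ((2 * a + q%:Z) %% (2 * q%:Z))%Z.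
by move=> *; apply/andP; split; nia.
Qed.

Lemma coef_rq_window (N q : nat) (a : {poly int}) (i : nat) : (0 < q)%N ->
  - (q%:Z) <= 2 * (rq N q a)`_i < q%:Z.
Proof.
move=> q_gt0; rewrite coef_poly; case: ifP => _; first exact: modq_window.
by rewrite mulr0; lia.
Qed.

Section Negacyclic.
Variables (q N : nat).
Hypotheses (q_prime : prime q) (N_gt0 : (0 < N)%N).
Local Notation "x %:Fq" := (x%:~R : 'F_q) (at level 2, format "x %:Fq").

(* [ncoef a k] is the coefficient of X^k of the image of [a] in
   F_q[X]/(X^N + 1) for k < N, extended to all k by X^(k + N) = - X^k. *)
Definition nsign (j k : nat) : 'F_q :=
  if (j %% (2 * N) == k %% (2 * N))%N then 1
  else if (j %% (2 * N) == (k + N) %% (2 * N))%N then -1 else 0.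

Definition ncoef (a : {poly int}) (k : nat) : 'F_q :=
  \sum_(0 <= j < size a) nsign j k * (a`_j)%:Fq.

Lemma ncoef_widen (a : {poly int}) (k b : nat) : (size a <= b)%N ->
  ncoef a k = \sum_(0 <= j < b) nsign j k * (a`_j)%:Fq.
Proof.
move=> hb; rewrite /ncoef (big_cat_nat (leq0n (size a)) hb) /=.
rewrite [X in _ + X]big1_seq ?addr0 // => j /andP[_].
by rewrite mem_iota => /andP[hj _]; rewrite nth_default // mulr0.
Qed.

Lemma ncoef0 (k : nat) : ncoef 0 k = 0.
Proof. by rewrite /ncoef size_poly0 big_geq. Qed.

Lemma ncoefD (a b : {poly int}) (k : nat) : ncoef (a + b) k = ncoef a k + ncoef b k.
Proof.
set s := maxn (size a) (size b).
rewrite (@ncoef_widen (a + b) k s) ?size_polyD // (@ncoef_widen a k s) ?leq_maxl //.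
rewrite (@ncoef_widen b k s) ?leq_maxr // -big_split /=.
by apply: eq_bigr => j _; rewrite coefD intrD mulrDr.
Qed.

Lemma ncoef_sum (I : Type) (r : seq I) (P : pred I) (f : I -> {poly int}) (k : nat) :
  ncoef (\sum_(i <- r | P i) f i) k = \sum_(i <- r | P i) ncoef (f i) k.
Proof.
by elim/big_rec2: _ => [|i y1 y2 _ <-]; rewrite ?ncoef0 ?ncoefD.
Qed.

Lemma ncoefCM (c : int) (a : {poly int}) (k : nat) : ncoef (c%:P * a) k = c%:Fq * ncoef a k.
Proof.
have hs : (size (c%:P * a)%R <= size a)%N.
  by apply/leq_sizeP => j hj; rewrite coefCM nth_default // mulr0.
rewrite (ncoef_widen k hs) /ncoef mulr_sumr; apply: eq_bigr => j _.
by rewrite coefCM intrM mulrCA.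
Qed.

Lemma ncoef_modn (a : {poly int}) (k1 k2 : nat) : (k1 = k2 %[mod 2 * N])%N ->
  ncoef a k1 = ncoef a k2.
Proof.
move=> e; have eN : ((k1 + N) %% (2 * N) = (k2 + N) %% (2 * N))%N.
  by rewrite -modnDml e modnDml.
by apply: eq_bigr => j _; rewrite /nsign e eN.
Qed.

Lemma nsign_shift (j k s : nat) : nsign (j + s) (k + s) = nsign j k.
Proof. by rewrite /nsign -!(addnC s) eqn_modDl -addnA eqn_modDl. Qed.

Lemma nsign_addN (j k : nat) : nsign j (k + N) = - nsign j k.
Proof.
have e : ((k + N + N) %% (2 * N) = k %% (2 * N))%N.
  by rewrite -addnA addnn -mul2n modnDr.
have ne : ((k + N) %% (2 * N) != k %% (2 * N))%N.
  by rewrite -{2}(addn0 k) eqn_modDl mod0n modn_small; lia.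
rewrite /nsign e; move: ne.
move: (j %% (2 * N))%N ((k + N) %% (2 * N))%N (k %% (2 * N))%N => x y z ne.
case: (x =P y) => [exy|_]; case: (x =P z) => [exz|_] //=; rewrite ?opprK ?oppr0 //.
by move: ne; rewrite -exy -exz eqxx.
Qed.

Lemma ncoef_addN (a : {poly int}) (k : nat) : ncoef a (k + N) = - ncoef a k.
Proof. by rewrite /ncoef -sumrN; apply: eq_bigr => j _; rewrite nsign_addN mulNr. Qed.

Lemma ncoef_mulXn (a : {poly int}) (s k : nat) : ncoef ('X^s * a) (k + s) = ncoef a k.
Proof.
have [->|a_neq0] := eqVneq a 0; first by rewrite mulr0 !ncoef0.
have hs : (size ('X^s * a)%R <= size a + s)%N.
  apply/leq_sizeP => j hj; rewrite coefXnM; case: ifP => // _.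
  by rewrite nth_default //; move: hj; move: (size a) => sa; lia.
rewrite (ncoef_widen _ hs) (big_cat_nat (leq0n s) (leq_addl _ _)) /=.
rewrite big1_seq ?add0r; last first.
  move=> j /andP[_]; rewrite mem_iota subn0 add0n => /andP[_ hj].
  by rewrite coefXnM hj mulr0.
rewrite -{1}(add0n s) big_addn addnK /ncoef.
by apply: eq_bigr => j _; rewrite coefXnM ltnNge leq_addl /= addnK nsign_shift.
Qed.

Lemma ncoef_mulXn_eq (a b : {poly int}) (s : nat) :
  ncoef a =1 ncoef b -> ncoef ('X^s * a) =1 ncoef ('X^s * b).
Proof.
move=> eab k; have s_le : (s <= 2 * N * s)%N by rewrite leq_pmull; lia.
have ek : (k = k + 2 * N * s - s + s %[mod 2 * N])%N.
  by rewrite subnK ?(leq_trans s_le) ?leq_addl // addnC (mulnC _ s) modnMDl.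
by rewrite !(ncoef_modn _ ek) !ncoef_mulXn eab.
Qed.

Lemma ncoef_mull (a a' b : {poly int}) :
  ncoef a =1 ncoef a' -> ncoef (a * b) =1 ncoef (a' * b).
Proof.
move=> eaa'; rewrite -(coefK b) poly_def !mulr_sumr => k; rewrite !ncoef_sum.
apply: eq_bigr => i _; rewrite -mul_polyC !(mulrCA _ _%:P) !ncoefCM.
by rewrite !(mulrC _ 'X^i) (ncoef_mulXn_eq i eaa').
Qed.

Lemma ncoef_mul (a a' b b' : {poly int}) :
  ncoef a =1 ncoef a' -> ncoef b =1 ncoef b' -> ncoef (a * b) =1 ncoef (a' * b').
Proof.
move=> eaa' ebb' k; rewrite (ncoef_mull b eaa') !(mulrC a').
exact: ncoef_mull.
Qed.

Lemma nsign_small (j k : nat) : (j < N)%N -> (k < N)%N ->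
  nsign j k = if j == k then 1 else 0.
Proof.
move=> hj hk; rewrite /nsign !modn_small; try lia.
by case: eqP => // _; case: eqP => //; lia.
Qed.

Lemma ncoef_small (a : {poly int}) (k : nat) : (size a <= N)%N -> (k < N)%N ->
  ncoef a k = (a`_k)%:Fq.
Proof.
move=> ha hk; rewrite (ncoef_widen k ha).
transitivity (\sum_(0 <= j < N | j == k) (a`_j)%:Fq); last by rewrite big_nat1_eq hk.
rewrite [RHS]big_mkcond /=; apply: eq_big_nat => j /andP[_ hj].
by rewrite nsign_small //; case: eqP; rewrite ?mul1r ?mul0r.
Qed.

Lemma ncoef_Xn (s k : nat) : ncoef 'X^s k = nsign s k.
Proof.
rewrite /ncoef size_polyXn big_nat_recr //= big1_seq ?add0r.
  by rewrite coefXn eqxx mulr1.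
move=> j /andP[_]; rewrite mem_iota subn0 add0n => hj.
by rewrite coefXn (ltn_eqF hj) mulr0.
Qed.

Lemma ncoef_eq_low (a b : {poly int}) :
  (forall k, (k < N)%N -> ncoef a k = ncoef b k) -> ncoef a =1 ncoef b.
Proof.
move=> eab k; rewrite -(ncoef_modn a (modn_mod k (2 * N))).
rewrite -(ncoef_modn b (modn_mod k (2 * N))).
have : (k %% (2 * N) < 2 * N)%N by rewrite ltn_pmod //; lia.
set r := (k %% (2 * N))%N => hr.
have [hrN|hNr] := ltnP r N; first exact: eab.
by rewrite -(subnK hNr) !ncoef_addN eab //; lia.
Qed.

Lemma modn_double (j : nat) : (j %% (2 * N) = j %% N + odd (j %/ N) * N)%N.
Proof.
have e1 := divn_eq j N; have e2 := odd_double_half (j %/ N).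
have hr : (j %% N < N)%N by rewrite ltn_pmod.
move: e1 e2 hr; set h := (j %/ N)%N; set r := (j %% N)%N => e1 e2 hr.
have -> : j = ((h./2) * (2 * N) + (r + odd h * N))%N.
  by rewrite e1 -{1}e2 -!muln2; case: (odd h) => /=; lia.
by rewrite modnMDl modn_small //; case: (odd h) => /=; lia.
Qed.

Lemma nsign_low (j k : nat) : (k < N)%N ->
  nsign j k = if (j %% N == k)%N then (-1) ^+ (j %/ N)%N else 0.
Proof.
move=> hk; rewrite /nsign modn_double (modn_small (_ : k < 2 * N)%N); last lia.
rewrite (modn_small (_ : k + N < 2 * N)%N); last lia.
have hr : (j %% N < N)%N by rewrite ltn_pmod.
rewrite -signr_odd; case: (odd (j %/ N)) => /=.
  rewrite mul1n eqn_add2r; case: eqP => [|_]; first lia.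
  by case: eqP.
by rewrite mul0n addn0; case: eqP => // _; case: eqP => //; lia.
Qed.

Lemma ncoef_rq (a : {poly int}) : ncoef (rq N q a) =1 ncoef a.
Proof.
apply: ncoef_eq_low => k hk; rewrite ncoef_small ?size_poly //.
rewrite coef_poly hk intr_modq // /nred rmorph_sum /ncoef big_mkord [LHS]big_mkcond /=.
apply: eq_bigr => j _; rewrite nsign_low //; case: eqP => _; last by rewrite mul0r.
by rewrite intrM rmorph_sign.
Qed.

Lemma ncoef_Xneg_mul (s : nat) (z : {poly int}) (k : nat) :
  ncoef (Xneg N q s * z) k = ncoef z (k + s %% (2 * N)).
Proof.
have hs : (s %% (2 * N) <= 2 * N)%N by apply: ltnW; rewrite ltn_pmod //; lia.
rewrite (ncoef_mull z (ncoef_rq _)) -(ncoef_mulXn z (2 * N - s %% (2 * N))).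
by apply: ncoef_modn; rewrite -addnA subnKC // modnDr.
Qed.

Lemma ncoef_mul_monomials (c d : int) (e1 e2 e3 k : nat) :
  ncoef ((c%:P * 'X^e1) * 'X^e2 * (d%:P * 'X^e3)) k = c%:Fq * d%:Fq * nsign (e1 + e2 + e3) k.
Proof.
have -> : (c%:P * 'X^e1) * 'X^e2 * (d%:P * 'X^e3) = (c * d)%:P * 'X^(e1 + e2 + e3).
  by rewrite !exprD polyCM; ring.
by rewrite ncoefCM ncoef_Xn intrM.
Qed.

Section Slots.
Variables n D : nat.
Hypothesis N_eq : N = (n * D)%N.

Let n_gt0 : (0 < n)%N. Proof. by move: N_gt0; rewrite N_eq; case: n. Qed.
Let D_gt0 : (0 < D)%N. Proof. by move: N_gt0; rewrite N_eq muln_gt0 => /andP[]. Qed.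
Let D_le_N : (D <= N)%N. Proof. by rewrite N_eq leq_pmull. Qed.
Let divN_n : (N %/ n = D)%N. Proof. by rewrite N_eq mulKn. Qed.
Let slot_lt k : (k < n)%N -> (k * D < N)%N.
Proof. by move=> hk; rewrite N_eq ltn_mul2r D_gt0. Qed.

Lemma nsign_slot (a b c d : nat) : (a < n)%N -> (c < n)%N -> (b < D)%N -> (d < D)%N ->
  nsign (2 * N + (a * D + b)) (c * D + d) = if (a == c) && (b == d) then 1 else 0.
Proof.
move=> ha hc hb hd.
have -> : nsign (2 * N + (a * D + b)) (c * D + d) = nsign (a * D + b) (c * D + d).
  by rewrite /nsign modnDl.
rewrite nsign_small ?eqn_mul_add // N_eq; exact: ltn_mul_add.
Qed.

Lemma ncoef_Pack (a : 'cV[int]_n) (k : 'I_n) : ncoef (Pack N q a) (k * D) = (a k 0)%:Fq.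
Proof.
rewrite /Pack divN_n ncoef_sum -[RHS](sum_if_eq (fun i => (a i 0)%:Fq) k).
apply: eq_bigr => i _; rewrite ncoefCM ncoef_Xn nsign_small ?slot_lt //.
by rewrite eqn_mul2r gtn_eqF //= intr_modq.
Qed.

Lemma size_Pack (a : 'cV[int]_n) : (size (Pack N q a) <= N)%N.
Proof.
apply/leq_sizeP => j hj; rewrite /Pack coef_sum big1 // => i _.
rewrite coefCM coefXn divN_n (_ : (j == i * D)%N = false) ?mulr0 //.
by apply/negbTE; have := slot_lt (ltn_ord i); lia.
Qed.

Lemma ncoef_Pack_Slot1 (a : 'cV[int]_n) (r : nat) (z : {poly int}) (k : 'I_n) : (r < n)%N ->
  ncoef (Pack N q a * Slot N 1 (rq N q (Xneg N q (r * (N %/ n)) * z))) (k * D)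
  = (a k 0)%:Fq * ncoef z (r * D).
Proof.
move=> hr; rewrite Slot1E mulrC ncoefCM ncoef_Pack [LHS]mulrC; congr (_ * _).
rewrite -ncoef_small ?size_poly // ncoef_rq ncoef_Xneg_mul add0n divN_n.
by rewrite modn_small //; have := slot_lt hr; lia.
Qed.

Lemma ncoef_Xneg_slot (z : {poly int}) (k : 'I_n) :
  ncoef (Xneg N q (N %/ n) * z) (k * D)
  = if (k.+1 < n)%N then ncoef z (k.+1 * D) else - ncoef z 0.
Proof.
rewrite ncoef_Xneg_mul divN_n modn_small; last lia.
case: ltnP => hk; first by rewrite mulSn addnC.
have k_last : k.+1 = n by have := ltn_ord k; lia.
by rewrite (_ : (k * D + D = 0 + N)%N) ?ncoef_addN // N_eq add0n -[in RHS]k_last mulSn addnC.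
Qed.

Lemma ncoef_Gtil_ytil (p : nat) (Gb : 'M[int]_(n, p)) (yb : 'cV[int]_p) (k : 'I_n) :
  (p <= D)%N ->
  ncoef (Gtil N q Gb * ytil N q yb) (k * D) = \sum_(j < p) (Gb k j)%:Fq * (yb j 0)%:Fq.
Proof.
move=> hp.
set G' := \sum_(i < n) (\sum_(j < p) (Gb i j)%:P * 'X^(2 * N - j)) * 'X^(i * D).
have eG : ncoef (Gtil N q Gb) =1 ncoef G'.
  move=> l; rewrite /Gtil divN_n ncoef_rq !ncoef_sum; apply: eq_bigr => i _.
  apply: ncoef_mull => {}l; rewrite ncoef_rq !ncoef_sum; apply: eq_bigr => j _.
  apply: ncoef_mul => // {}l; rewrite /Xneg ncoef_rq modn_small //.
  by have := ltn_ord j; lia.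
rewrite (ncoef_mul eG (ncoef_rq _)) /G' mulr_suml ncoef_sum.
rewrite -[RHS](sum_if_eq (fun i => \sum_(j < p) (Gb i j)%:Fq * (yb j 0)%:Fq) k).
apply: eq_bigr => i _; rewrite !mulr_suml ncoef_sum; apply: eq_bigr => j _.
rewrite mulr_sumr ncoef_sum.
rewrite -[RHS](sum_if_eq (fun j' => (Gb i j)%:Fq * (yb j' 0)%:Fq * (if i == k then 1 else 0)) j).
apply: eq_bigr => j' _; rewrite ncoef_mul_monomials -(nsign_shift _ _ j).
have hj : (j < D)%N by apply: leq_trans hp.
have hj' : (j' < D)%N by apply: leq_trans hp.
have -> : (2 * N - j + i * D + j' + j = 2 * N + (i * D + j'))%N by have := D_le_N; lia.
rewrite nsign_slot // !val_eqE.
by case: (i == k); case: (j' == j); rewrite /= ?mulr0 ?mulr1.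
Qed.

Lemma ncoef_Htil_Slot (m tau D' : nat) (Hb : 'M[int]_(m, n)) (z : {poly int}) (i : 'I_m) :
  D = (tau * D')%N -> (m <= tau)%N -> (size z <= N)%N ->
  ncoef (Htil N q tau Hb * Slot N n z) (i * D') = \sum_(j < n) (Hb i j)%:Fq * ncoef z (j * D).
Proof.
move=> D_eq m_le hz.
have D'_gt0 : (0 < D')%N by move: D_gt0; rewrite D_eq muln_gt0 => /andP[].
have divN_ntau : (N %/ (n * tau) = D')%N by rewrite N_eq D_eq mulnA mulKn // muln_gt0 n_gt0; lia.
have slot'_lt i' : (i' < m)%N -> (i' * D' < D)%N.
  by move=> hi'; rewrite D_eq ltn_mul2r D'_gt0; apply: leq_trans m_le.
set H' := \sum_(i' < m) (\sum_(j < n) (Hb i' j)%:P * 'X^(2 * N - j * D)) * 'X^(i' * D').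
have eH : ncoef (Htil N q tau Hb) =1 ncoef H'.
  move=> l; rewrite /Htil divN_ntau divN_n ncoef_rq !ncoef_sum; apply: eq_bigr => i' _.
  apply: ncoef_mull => {}l; rewrite ncoef_rq !ncoef_sum; apply: eq_bigr => j _.
  apply: ncoef_mul => // {}l; rewrite /Xneg ncoef_rq modn_small //.
  by have := slot_lt (ltn_ord j); lia.
rewrite (ncoef_mull _ eH) /H' /Slot divN_n mulr_suml ncoef_sum.
rewrite -[RHS](sum_if_eq (fun i' => \sum_(j < n) (Hb i' j)%:Fq * ncoef z (j * D)) i).
apply: eq_bigr => i' _; rewrite !mulr_suml ncoef_sum; apply: eq_bigr => j _.
rewrite mulr_sumr ncoef_sum.
rewrite -[RHS](sum_if_eq (fun k : 'I_n =>
  (Hb i' j)%:Fq * ncoef z (k * D) * (if i' == i then 1 else 0)) j).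
apply: eq_bigr => k _; rewrite ncoef_mul_monomials -(nsign_shift _ _ (j * D)).
have := slot_lt (ltn_ord j); have := slot'_lt _ (ltn_ord i'); have := slot'_lt _ (ltn_ord i).
move=> hi hi' hj.
have -> : (2 * N - j * D + i' * D' + k * D + j * D = 2 * N + (k * D + i' * D'))%N by lia.
rewrite [(i * D' + _)%N]addnC nsign_slot // eqn_mul2r (gtn_eqF D'_gt0) /=.
rewrite -ncoef_small ?slot_lt //.
by rewrite !val_eqE; case: (k == j); case: (i' == i); rewrite /= ?mulr0 ?mulr1.
Qed.

Section Controller.
Variables (p : nat) (ds : seq nat) (c : nat -> nat -> int).
Variables (Gb : 'M[int]_(n, p)) (z0 : 'cV[int]_n) (yb : nat -> 'cV[int]_p).
Hypotheses (ds_pos : all (fun d => 0 < d)%N ds) (sum_ds : sumn ds = n) (p_le : (p <= D)%N).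

Local Notation ztilde := (ztraj N q ds c Gb z0 yb).
Local Notation zbar := (zbar_traj (Fbar_mx n ds c) Gb z0 yb).

Lemma size_ztraj t : (size (ztilde t) <= N)%N.
Proof. by case: t => [|t]; [exact: size_Pack | exact: size_poly]. Qed.

Lemma ncoef_ztraj t (k : 'I_n) : ncoef (ztilde t) (k * D) = (zbar t k 0)%:Fq.
Proof.
elim: t k => [|t IH] k /=; first exact: ncoef_Pack.
set z := ztilde t; pose g j := ncoef z (j * D).
have shift_term : ncoef (Xneg N q (N %/ n) * z) (k * D) = \sum_(j < n) (S_entry n k j)%:~R * g j.
  by rewrite ncoef_Xneg_slot sum_S_entry // /g mul0n.
have block_terms : ncoef (\sum_(l < size ds) Ftil N q n ds c l *
      Slot N 1 (rq N q (Xneg N q (bstart ds l * (N %/ n)) * z))) (k * D)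
    = \sum_(l < size ds)
        (Fbar_entry ds c k (bstart ds l) - S_entry n k (bstart ds l))%:~R * g (bstart ds l).
  rewrite ncoef_sum; apply: eq_bigr => l _.
  by rewrite ncoef_Pack_Slot1 ?mxE // -sum_ds bstart_lt_sumn.
rewrite ncoef_rq !ncoefD block_terms shift_term sum_Fbar_entry // ncoef_Gtil_ytil //.
rewrite !mxE intrD !rmorph_sum; congr (_ + _); apply: eq_bigr => j _.
  by rewrite /g IH mxE rmorphM.
by rewrite rmorphM.
Qed.

Lemma ncoef_util (m tau D' : nat) (Hb : 'M[int]_(m, n)) t (i : 'I_m) :
  D = (tau * D')%N -> (m <= tau)%N ->
  ((util N q tau ds c Gb Hb z0 yb t)`_(i * D'))%:Fq = ((Hb *m zbar t) i 0)%:Fq.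
Proof.
move=> D_eq m_le.
have iD'_lt : (i * D' < N)%N.
  apply: leq_trans D_le_N; rewrite D_eq ltn_mul2r (leq_trans (ltn_ord i) m_le) andbT.
  by move: D_gt0; rewrite D_eq muln_gt0 => /andP[].
rewrite -ncoef_small ?size_poly // /util ncoef_rq ncoef_Htil_Slot ?size_ztraj //.
by rewrite mxE rmorph_sum; apply: eq_bigr => j _; rewrite ncoef_ztraj rmorphM.
Qed.

End Controller.
End Slots.
End Negacyclic.

Lemma intr_Fp_eq0 (q : nat) (d : int) : prime q -> (d%:~R : 'F_q) = 0 -> (q %| `|d|)%N.
Proof.
move=> q_prime; rewrite (dvdn_pcharf (pchar_Fp q_prime)).
case: d => k; first by rewrite pmulrn => ->.
by rewrite NegzE mulrNz pmulrn abszN => /eqP; rewrite oppr_eq0.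
Qed.

Lemma intr_Fp_inj_window (q : nat) (v w : int) : prime q ->
  (v%:~R : 'F_q) = w%:~R -> - (q%:Z) <= 2 * v < q%:Z -> - (q%:Z) <= 2 * w < q%:Z ->
  v = w.
Proof.
move=> q_prime evw hv hw.
have q_dvd : (q %| `|v - w|)%N by apply: intr_Fp_eq0; rewrite // intrB evw subrr.
have lt_q : (`|v - w| < q)%N by lia.
have /eqP : `|v - w|%N = 0%N.
  by apply/eqP; apply: contraTT lt_q; rewrite -lt0n -leqNgt => /dvdn_leq; apply.
by rewrite absz_eq0 subr_eq0 => /eqP.
Qed.

Lemma vnorm_ge (k : nat) (v : 'cV[rat]_k) (i : 'I_k) : `|v i 0| <= vnorm v.
Proof. exact: (le_bigmax 0 (fun i => `|v i 0|) i). Qed.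

Lemma window_of_abs_lt (q : nat) (w : int) :
  `|(w%:~R : rat)| < q%:R / 2 -> - (q%:Z) <= 2 * w < q%:Z.
Proof.
rewrite -intr_norm => hw; have : (`|w| * 2)%:~R < (q%:Z)%:~R :> rat.
  by rewrite intrM; move: hw; lra.
by rewrite ltr_int; lia.
Qed.

Lemma zbar_traj_scaled (n p : nat) (F : 'M[rat]_n) (G : 'M[rat]_(n, p)) (T : 'M[rat]_n)
  (xini : 'cV[rat]_n) (y : nat -> 'cV[rat]_p) (L s1 : rat)
  (Fb : 'M[int]_n) (Gb : 'M[int]_(n, p)) (z0 : 'cV[int]_n) (yb : nat -> 'cV[int]_p) :
  T \in unitmx -> map_mx intr Fb = T *m F *m invmx T ->
  map_mx intr Gb = s1^-1 *: (T *m G) -> map_mx intr z0 = (L * s1)^-1 *: (T *m xini) ->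
  (forall t, map_mx intr (yb t) = L^-1 *: y t) ->
  forall t, map_mx intr (zbar_traj Fb Gb z0 yb t) = (L * s1)^-1 *: (T *m xtraj F G xini y t).
Proof.
move=> T_unit hF hG hz hy; elim=> [|t IH] //=.
rewrite map_mxD !map_mxM IH hF hG hy.
rewrite -!scalemxAr -!scalemxAl -!mulmxA (mulmxA (invmx T)) mulVmx // mul1mx.
rewrite mulmxDr scalerDr !mulmxA; congr (_ + _).
by rewrite scalerA invfM mulrC.
Qed.

Lemma Hbar_mul_scaled (m n : nat) (H : 'M[rat]_(m, n)) (T : 'M[rat]_n) (x : 'cV[rat]_n)
  (L s1 s2 : rat) (Hb : 'M[int]_(m, n)) (z : 'cV[int]_n) :
  T \in unitmx -> map_mx intr Hb = s2^-1 *: (H *m invmx T) ->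
  map_mx intr z = (L * s1)^-1 *: (T *m x) ->
  map_mx intr (Hb *m z) = (L * s1 * s2)^-1 *: (H *m x).
Proof.
move=> T_unit hH hz.
rewrite map_mxM hz hH -scalemxAr -scalemxAl scalerA -!mulmxA (mulmxA (invmx T)).
by rewrite mulVmx // mul1mx -invfM mulrC.
Qed.

Lemma dvdn_pow2_divn (a b k : nat) :
  (2 ^ b %| 2 ^ a)%N -> (2 ^ k <= 2 ^ a %/ 2 ^ b)%N -> (2 ^ k %| 2 ^ a %/ 2 ^ b)%N.
Proof.
rewrite dvdn_Pexp2l // => b_le; rewrite -expnB //.
by rewrite leq_exp2l // => k_le; rewrite dvdn_exp2l.
Qed.

Theorem theorem1
  (n m p N q : nat)
  (F : 'M[int]_n) (G : 'M[rat]_(n, p)) (H : 'M[rat]_(m, n))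
  (xini : 'cV[rat]_n) (y : nat -> 'cV[rat]_p)
  (T : 'M[rat]_n) (ds : seq nat) (c : nat -> nat -> int)
  (L s1 s2 : rat)
  (Gbar : 'M[int]_(n, p)) (Hbar : 'M[int]_(m, n)) (zini : 'cV[int]_n)
  (ybar : nat -> 'cV[int]_p) :
  (* rational canonical form  Fbar = T F T^-1 *)
  T \in unitmx ->
  rcf_data n ds c ->
  map_mx intr (Fbar_mx n ds c) = T *m map_mx intr F *m invmx T ->
  (* scale factors *)
  0 < L -> L^-1 \is a Num.nat ->
  0 < s1 -> s1^-1 \is a Num.nat ->
  0 < s2 -> s2^-1 \is a Num.nat ->
  map_mx intr Gbar = s1^-1 *: (T *m G) ->
  map_mx intr Hbar = s2^-1 *: (H *m invmx T) ->
  map_mx intr zini = (L * s1)^-1 *: (T *m xini) ->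
  (forall t, map_mx intr (ybar t) = L^-1 *: y t) ->
  (* parameters *)
  prime q ->
  (exists k, N = 2 ^ k)%N ->
  (exists k, n = 2 ^ k)%N ->
  (n %| N)%N ->
  (n * p <= N)%N ->
  (tau_of m <= N %/ n)%N ->
  (* no overflow *)
  (exists B : rat, B < q%:R / 2 /\
     forall t,
       vnorm ((L * s1)^-1 *: (T *m xtraj (map_mx intr F) G xini y t)) <= B /\
       vnorm ((L * s1 * s2)^-1 *: (H *m xtraj (map_mx intr F) G xini y t)) <= B) ->
  forall t,
    (L * s1 * s2) *: map_mx intr
        (Unpack N n (tau_of m) m (util N q (tau_of m) ds c Gbar Hbar zini ybar t))
    = H *m xtraj (map_mx intr F) G xini y t.
Proof.
move=> T_unit [ds_pos [sum_ds _]] hF L_gt0 _ s1_gt0 _ s2_gt0 _ hG hH hz hy q_prime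
  [a N_pow] [b n_pow] n_dvd_N np_le tau_le [B [B_lt hB]] t.
have [n_gt0 N_gt0] : (0 < n)%N /\ (0 < N)%N by rewrite n_pow N_pow !expn_gt0.
set D := (N %/ n)%N; set tau := tau_of m; set D' := (N %/ (n * tau))%N.
have N_eq : N = (n * D)%N by rewrite /D mulnC divnK.
have D_eq : D = (tau * D')%N.
  rewrite /D' divnMA -/D mulnC divnK //.
  by move: n_dvd_N tau_le; rewrite /D N_pow n_pow; apply: dvdn_pow2_divn.
have p_le : (p <= D)%N by rewrite -(leq_pmul2l n_gt0) -N_eq.
have m_le : (m <= tau)%N by exact: up_logP.
set x := xtraj (map_mx intr F) G xini y.
set zb := zbar_traj (Fbar_mx n ds c) Gbar zini ybar.
have hHz : map_mx intr (Hbar *m zb t) = (L * s1 * s2)^-1 *: (H *m x t).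
  by apply: (Hbar_mul_scaled (T := T)) => //; apply: zbar_traj_scaled.
have -> : Unpack N n tau m (util N q tau ds c Gbar Hbar zini ybar t) = Hbar *m zb t.
  apply/matrixP => i j; rewrite (ord1 j) mxE -/D'.
  apply: (intr_Fp_inj_window q_prime).
  - exact: (ncoef_util q_prime N_gt0 N_eq c _ _ _ ds_pos sum_ds p_le _ _ _ D_eq m_le).
  - exact/coef_rq_window/prime_gt0.
  - apply: window_of_abs_lt; apply: le_lt_trans B_lt; apply: le_trans (proj2 (hB t)).
    by rewrite -hHz; have := vnorm_ge (map_mx intr (Hbar *m zb t)) i; rewrite mxE.
by rewrite hHz scalerA mulfV ?scale1r // !mulf_neq0 ?gt_eqF.
Qed.
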